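(* Let $p$ be a prime and $\Gamma_p=T^{p-1}\rtimes_\rho C_p$. Then: (1) for every $t\in T^{p-1}$ the element $ta$ has order $p$, and the subgroup $\langle ta\rangle$ is conjugate in $\Gamma_p$ to $C_p=\langle a\rangle$; (2) the centre of $\Gamma_p$ is $Z(\Gamma_p)=\langle(\xi_p,\xi_p^2,\dots,\xi_p^{p-1})\rangle\le T^{p-1}$, where $\xi_p=e^{2\pi\sqrt{-1}/p}$; (3) the normaliser of $C_p$ in $\Gamma_p$ is $N_{\Gamma_p}(C_p)=Z(\Gamma_p)\times C_p$.
   Context: Let $a$ be a fixed generator of $C_p$. $\Gamma_p=T^{p-1}\rtimes_\rho C_p$ is the semidirect product in which $a t a^{-1}=\rho(a)(t)$, where for $t=(t_1,\dots,t_{p-1})\in T^{p-1}$, $\rho(a)(t)=(t_{p-1}^{-1},\,t_1t_{p-1}^{-1},\,t_2t_{p-1}^{-1},\dots,t_{p-2}t_{p-1}^{-1})$. *)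

From HB Require Import structures.
From mathcomp Require Import all_boot all_order all_algebra.
From mathcomp Require Import complex.
From mathcomp Require Import reals trigo.
Set Implicit Arguments. Unset Strict Implicit. Unset Printing Implicit Defensive.
Import Order.TTheory GRing.Theory Num.Theory.
Local Open Scope ring_scope.

(* Elements of T^(n) are n-tuples of complex numbers of modulus 1. *)
Definition inT (R : realType) (z : R[i]) : bool := `|z| == 1.

Definition tmul (R : realType) n (t s : n.-tuple R[i]) : n.-tuple R[i] :=
  [tuple t`_i * s`_i | i < n].
Definition tinv (R : realType) n (t : n.-tuple R[i]) : n.-tuple R[i] :=
  [tuple (t`_i)^-1 | i < n].
Definition tone (R : realType) n : n.-tuple R[i] := [tuple 1 | i < n].

(* rho(a)(t_1,...,t_n) = (t_n^-1, t_1 t_n^-1, ..., t_{n-1} t_n^-1)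
   (0-based: component 0 is t_n^-1, component i>0 is t_{i-1} * t_n^-1). *)
Definition rho (R : realType) n (t : n.-tuple R[i]) : n.-tuple R[i] :=
  [tuple (if val i == 0%N then 1 else t`_(val i).-1) / last 1 t | i < n].

(* Gamma_p = T^(p-1) x|_rho C_p : an element t a^k is encoded as (t, k) with
   0 <= k < p; (t, k) (s, m) = (t * rho^k(s), (k + m) mod p). *)
Definition elt (R : realType) (p : nat) := ((p.-1).-tuple R[i] * nat)%type.

Definition inGamma (R : realType) p (x : elt R p) : Prop :=
  (x.2 < p)%N /\ all (@inT R) x.1.

Definition gmul (R : realType) p (x y : elt R p) : elt R p :=
  (tmul x.1 (iter x.2 (@rho R _) y.1), ((x.2 + y.2) %% p)%N).

Definition gone (R : realType) p : elt R p := (tone R _, 0%N).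

(* inverse: (t a^k)^-1 = a^-k t^-1 = rho^(p-k)(t^-1) a^(p-k) *)
Definition ginv (R : realType) p (x : elt R p) : elt R p :=
  (iter (p - x.2) (@rho R _) (tinv x.1), ((p - x.2) %% p)%N).

Definition gpow (R : realType) p (x : elt R p) (m : nat) : elt R p :=
  iter m (gmul x) (gone R p).

Definition gen_a (R : realType) p : elt R p := (tone R _, 1%N).
Definition emb (R : realType) p (t : (p.-1).-tuple R[i]) : elt R p := (t, 0%N).

Definition has_order (R : realType) p (x : elt R p) (n : nat) : Prop :=
  (0 < n)%N /\ gpow x n = gone R p /\
  (forall m, (0 < m < n)%N -> gpow x m <> gone R p).

Definition cyc (R : realType) p (x : elt R p) : elt R p -> Prop :=
  fun y => exists m, y = gpow x m \/ y = gpow (ginv x) m.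

Definition conjset (R : realType) p (g : elt R p) (H : elt R p -> Prop)
  : elt R p -> Prop :=
  fun y => exists2 x, H x & y = gmul (gmul g x) (ginv g).

Definition centre (R : realType) p : elt R p -> Prop :=
  fun x => inGamma x /\ forall y, inGamma y -> gmul x y = gmul y x.

Definition normaliser (R : realType) p (H : elt R p -> Prop) : elt R p -> Prop :=
  fun g => inGamma g /\ forall y, conjset g H y <-> H y.

Definition xi (R : realType) (p : nat) : R[i] :=
  Complex (cos (2 * pi / p%:R)) (sin (2 * pi / p%:R)).

Definition zeta (R : realType) p : elt R p :=
  emb [tuple (xi R p) ^+ (val i).+1 | i < p.-1].

From mathcomp Require Import all_boot all_order all_algebra.
From mathcomp Require Import complex.
From mathcomp Require Import reals trigo.
From mathcomp Require Import ring lra zify.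
Import Order.TTheory GRing.Theory Num.Theory.
Local Open Scope ring_scope.
Set Implicit Arguments. Unset Strict Implicit. Unset Printing Implicit Defensive.

(* A tuple t = (t`_0, ..., t`_(p-2)) in T^{p-1} is extended to the p-periodic
   function [coord t] on nat with coord t 0 = 1 and coord t k = t`_(k-1)
   for 0 < k < p.
   In these coordinates rho is a normalised shift,
     coord (rho t) k = coord t (k - 1) / coord t (p - 1),
   hence rho^p = id and rho is a multiplicative automorphism; this gives the
   group laws of Gamma_p and the fact that conjugation is a group morphism.
   (1) Every t in T^{p-1} is a coboundary, rho(s) = s t with s in T^{p-1}
       (built from a p-th root of the inverse of the product of the entries
       of t); then s (t a) s^{-1}
       = a, so t a has order p and <t a> is conjugate to <a>.
   (2) A central element t a^k must commute with a test tuple no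
       nontrivial power of rho fixes, so k = 0 (p prime), and with a, so
       rho(t) = t; the rho-fixed tuples are (w, w^2, ..., w^{p-1}) with
       w^p = 1, i.e. the powers of zeta, as xi_p is a primitive p-th root.
   (3) t a^k conjugates a to (t rho(t)^{-1}) a, so it normalises <a> iff
       rho(t) = t, i.e. iff t a^k is the product of the central element t and
       a^k in C_p. *)

Lemma nth_mktuple_nat (T : Type) (x0 : T) n (f : 'I_n -> T) j (hj : (j < n)%N) :
  nth x0 [tuple f i | i < n] j = f (Ordinal hj).
Proof. exact: (nth_mktuple f x0 (Ordinal hj)). Qed.

Lemma eq_from_nth_tuple (T : Type) (x0 : T) n (t s : n.-tuple T) :
  (forall j, (j < n)%N -> nth x0 t j = nth x0 s j) -> t = s.
Proof.
move=> eq_ts; apply: val_inj; apply: (@eq_from_nth _ x0); first by rewrite !size_tuple.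
by move=> j; rewrite size_tuple; apply: eq_ts.
Qed.

(* Everything except the centre and normaliser computations only needs p > 1. *)
Section TwistedShift.
Variables (R : realType) (p : nat).
Hypothesis p_gt1 : (1 < p)%N.
Let p_gt0 : (0 < p)%N := ltnW p_gt1.
Local Notation C := R[i].
Local Notation tup := ((p.-1).-tuple R[i]).
Local Notation rho := (@rho R p.-1).
Local Notation one := (tone R p.-1).
Implicit Types (t s : tup) (k l : nat).

Lemma nth_tmul t s j : (j < p.-1)%N -> (tmul t s)`_j = t`_j * s`_j.
Proof. by move=> hj; rewrite /tmul (nth_mktuple_nat _ _ hj). Qed.

Lemma nth_tinv t j : (j < p.-1)%N -> (tinv t)`_j = (t`_j)^-1.
Proof. by move=> hj; rewrite /tinv (nth_mktuple_nat _ _ hj). Qed.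

Lemma nth_tone j : (j < p.-1)%N -> one`_j = 1.
Proof. by move=> hj; rewrite /tone (nth_mktuple_nat _ _ hj). Qed.

Lemma nth_rho t j : (j < p.-1)%N ->
  (rho t)`_j = (if j == 0%N then 1 else t`_j.-1) / t`_(p.-2).
Proof.
move=> hj; rewrite /rho (nth_mktuple_nat _ _ hj) /=; congr (_ / _).
have : size t = (p.-2).+1 by rewrite size_tuple; lia.
by case: t => s /= _ hs; rewrite (last_nth 1) hs /= (set_nth_default 0) // hs.
Qed.

(* The coordinates of t: the p-periodic extension of (1, t`_0, ..., t`_(p-2)).
   In these coordinates [rho] becomes a normalised shift (see [coord_rho]). *)
Definition coord t k : C := if (k %% p == 0)%N then 1 else t`_((k %% p).-1).

Lemma coord_index k : (k %% p != 0)%N -> ((k %% p).-1 < p.-1)%N.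
Proof. by have := ltn_pmod k p_gt0; lia. Qed.

Lemma coord_mod t k : coord t (k %% p) = coord t k.
Proof. by rewrite /coord modn_mod. Qed.

Lemma coord_congr t k l : (k = l %[mod p])%N -> coord t k = coord t l.
Proof. by move=> h; rewrite -coord_mod h coord_mod. Qed.

Lemma coord0 t : coord t 0 = 1.
Proof. by rewrite /coord mod0n. Qed.

Lemma coord_nth t j : (j < p.-1)%N -> coord t j.+1 = t`_j.
Proof. by move=> hj; rewrite /coord modn_small //; lia. Qed.

Lemma tuple_coord_ext t s : (forall k, coord t k = coord s k) -> t = s.
Proof. by move=> h; apply: (@eq_from_nth_tuple _ 0) => j hj; rewrite -!coord_nth. Qed.

Lemma coord_tmul t s k : coord (tmul t s) k = coord t k * coord s k.
Proof.
rewrite /coord; case: ifP => [_|/negbT hk]; first by rewrite mulr1.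
exact/nth_tmul/coord_index.
Qed.

Lemma coord_tinv t k : coord (tinv t) k = (coord t k)^-1.
Proof.
rewrite /coord; case: ifP => [_|/negbT hk]; first by rewrite invr1.
exact/nth_tinv/coord_index.
Qed.

Lemma coord_tone k : coord one k = 1.
Proof. by rewrite /coord; case: ifP => [//|/negbT hk]; exact/nth_tone/coord_index. Qed.

(* Tuples with no vanishing entry; on these [rho] is invertible. *)
Definition nonvanishing t := forall k, coord t k != 0.

Lemma coord_rho t k : nonvanishing t ->
  coord (rho t) k = coord t (k + p.-1) / coord t p.-1.
Proof.
move=> t_nz; have last_coord : coord t p.-1 = t`_(p.-2).
  by rewrite -coord_nth; [congr coord; lia | lia].
rewrite [LHS]/coord; case: ifP => [/eqP hk|/negbT hk].
  rewrite (@coord_congr t (k + p.-1) p.-1) ?divff //.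
  by rewrite -modnDml hk.
rewrite nth_rho ?coord_index // last_coord; congr (_ / _).
have := ltn_pmod k p_gt0; rewrite /coord.
have -> : ((k + p.-1) %% p = (k %% p).-1)%N.
  rewrite -modnDml -[RHS](@modn_small _ p); last lia.
  have -> : (k %% p + p.-1 = p + (k %% p).-1)%N by lia.
  by rewrite modnDl.
by move: hk; case: (k %% p)%N => [|[|m]].
Qed.

Lemma nonvanishing_tone : nonvanishing one.
Proof. by move=> k; rewrite coord_tone oner_eq0. Qed.

Lemma nonvanishing_tmul t s : nonvanishing t -> nonvanishing s -> nonvanishing (tmul t s).
Proof. by move=> ht hs k; rewrite coord_tmul mulf_neq0. Qed.

Lemma nonvanishing_tinv t : nonvanishing t -> nonvanishing (tinv t).
Proof. by move=> ht k; rewrite coord_tinv invr_eq0. Qed.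

Lemma nonvanishing_rho t : nonvanishing t -> nonvanishing (rho t).
Proof. by move=> ht k; rewrite coord_rho // mulf_neq0 ?invr_eq0. Qed.

Lemma nonvanishing_iter m t : nonvanishing t -> nonvanishing (iter m rho t).
Proof. by move=> ht; elim: m => //= m; apply: nonvanishing_rho. Qed.

Lemma coord_iter m t k : nonvanishing t ->
  coord (iter m rho t) k = coord t (k + p.-1 * m) / coord t (p.-1 * m).
Proof.
move=> t_nz; elim: m k => [|m IH] k; first by rewrite /= muln0 addn0 coord0 divr1.
rewrite iterS coord_rho; last exact: nonvanishing_iter.
rewrite !IH -addnA -!mulnS.
by have := t_nz (p.-1 * m)%N; have := t_nz (p.-1 * m.+1)%N => h1 h2; field; rewrite h1 h2.
Qed.

Lemma iter_rho_p t : nonvanishing t -> iter p rho t = t.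
Proof.
move=> t_nz; apply: tuple_coord_ext => k; rewrite coord_iter //.
rewrite -[coord t (p.-1 * p)]coord_mod modnMl coord0 divr1.
by apply: coord_congr; rewrite addnC modnMDl.
Qed.

Lemma iter_rho_mod m t : nonvanishing t -> iter (m %% p) rho t = iter m rho t.
Proof.
move=> t_nz; have iter_multiple q : iter (q * p) rho t = t.
  by elim: q => [|q IH]; rewrite ?mul0n // mulSn iterD IH iter_rho_p.
by rewrite {2}(divn_eq m p) addnC iterD iter_multiple.
Qed.

Lemma rho_tmul t s : nonvanishing t -> nonvanishing s ->
  rho (tmul t s) = tmul (rho t) (rho s).
Proof.
move=> ht hs; apply: tuple_coord_ext => k.
rewrite coord_rho; last exact: nonvanishing_tmul.
rewrite !coord_tmul !coord_rho //.
by have := ht p.-1; have := hs p.-1 => h1 h2; field; rewrite h1 h2.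
Qed.

Lemma rho_tinv t : nonvanishing t -> rho (tinv t) = tinv (rho t).
Proof.
move=> ht; apply: tuple_coord_ext => k.
rewrite coord_rho; last exact: nonvanishing_tinv.
rewrite !coord_tinv !coord_rho //.
by have := ht p.-1; have := ht (k + p.-1)%N => h1 h2; field; rewrite h1 h2.
Qed.

Lemma rho_tone : rho one = one.
Proof.
apply: tuple_coord_ext => k; rewrite coord_rho; last exact: nonvanishing_tone.
by rewrite !coord_tone divr1.
Qed.

Lemma iter_tmul m t s : nonvanishing t -> nonvanishing s ->
  iter m rho (tmul t s) = tmul (iter m rho t) (iter m rho s).
Proof. by move=> ht hs; elim: m => //= m ->; rewrite rho_tmul //; exact: nonvanishing_iter. Qed.

Lemma iter_tinv m t : nonvanishing t -> iter m rho (tinv t) = tinv (iter m rho t).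
Proof. by move=> ht; elim: m => //= m ->; rewrite rho_tinv //; exact: nonvanishing_iter. Qed.

Lemma iter_tone m : iter m rho one = one.
Proof. by elim: m => //= m ->; rewrite rho_tone. Qed.

Lemma iter_fixed m t : rho t = t -> iter m rho t = t.
Proof. by move=> fix_t; elim: m => //= m ->. Qed.

Lemma tmulA t s (r : tup) : tmul t (tmul s r) = tmul (tmul t s) r.
Proof. by apply: tuple_coord_ext => k; rewrite !coord_tmul mulrA. Qed.

Lemma tmulC t s : tmul t s = tmul s t.
Proof. by apply: tuple_coord_ext => k; rewrite !coord_tmul mulrC. Qed.

Lemma tmul1t t : tmul one t = t.
Proof. by apply: tuple_coord_ext => k; rewrite coord_tmul coord_tone mul1r. Qed.

Lemma tmult1 t : tmul t one = t.
Proof. by rewrite tmulC tmul1t. Qed.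

Lemma tmulV t : nonvanishing t -> tmul t (tinv t) = one.
Proof. by move=> ht; apply: tuple_coord_ext => k; rewrite coord_tmul coord_tinv coord_tone divff. Qed.

Lemma tmulVt t : nonvanishing t -> tmul (tinv t) t = one.
Proof. by move=> ht; rewrite tmulC tmulV. Qed.

Lemma tmulIr t s r : nonvanishing t -> tmul s t = tmul r t -> s = r.
Proof.
move=> t_nz /(congr1 (fun u => tmul u (tinv t))).
by rewrite -!tmulA !tmulV // !tmult1.
Qed.

Local Notation E := (elt R p).
Local Notation e := (gone R p).
Implicit Types (x y z g : E).

(* Elements with reduced exponent and nonvanishing tuple part; they form a
   group (with [gmul], [ginv], [gone]) containing Gamma_p. *)
Definition wf x := (x.2 < p)%N /\ nonvanishing x.1.

Lemma gmulA x y z : nonvanishing y.1 -> nonvanishing z.1 ->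
  gmul (gmul x y) z = gmul x (gmul y z).
Proof.
case: x y z => [t k] [s m] [r l] /= hs hr; rewrite /gmul /=; congr (_, _).
  have hmr := nonvanishing_iter m hr.
  by rewrite iter_tmul // iter_rho_mod // -iterD tmulA.
by rewrite modnDml modnDmr addnA.
Qed.

Lemma gmul1g x : (x.2 < p)%N -> gmul e x = x.
Proof. by case: x => t k /= hk; rewrite /gmul /= tmul1t add0n modn_small. Qed.

Lemma gmulg1 x : (x.2 < p)%N -> gmul x e = x.
Proof. by case: x => t k /= hk; rewrite /gmul /= iter_tone tmult1 addn0 modn_small. Qed.

Lemma gmulV x : wf x -> gmul x (ginv x) = e.
Proof.
case: x => t k [/= hk ht]; rewrite /gmul /ginv /=; congr (_, _).
  have hti := nonvanishing_tinv ht.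
  by rewrite -iterD subnKC ?iter_rho_p ?tmulV // ltnW.
by rewrite modnDmr subnKC ?modnn // ltnW.
Qed.

Lemma gmulVg x : wf x -> gmul (ginv x) x = e.
Proof.
case: x => t k [/= hk ht]; rewrite /gmul /ginv /=; congr (_, _).
  have hti := nonvanishing_tinv ht; have hkt := nonvanishing_iter (p - k) ht.
  by rewrite iter_rho_mod ?iter_tinv ?tmulVt.
by rewrite modnDml subnK ?modnn // ltnW.
Qed.

Lemma wf_one : wf e.
Proof. by split; [exact: p_gt0 | exact: nonvanishing_tone]. Qed.

Lemma wf_mul x y : wf x -> wf y -> wf (gmul x y).
Proof.
case: x y => [t k] [s m] [_ ht] [_ hs]; split; first exact: ltn_pmod.
by apply: nonvanishing_tmul => //; apply: nonvanishing_iter.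
Qed.

Lemma wf_inv x : wf x -> wf (ginv x).
Proof.
case: x => t k [_ ht]; split; first exact: ltn_pmod.
exact/nonvanishing_iter/nonvanishing_tinv.
Qed.

Lemma wf_pow x m : wf x -> wf (gpow x m).
Proof. by move=> hx; elim: m => [|m IH] /=; [exact: wf_one | exact: wf_mul]. Qed.

Lemma wf_nonvanishing x : wf x -> nonvanishing x.1. Proof. by case. Qed.
Lemma wf_lt x : wf x -> (x.2 < p)%N. Proof. by case. Qed.

Local Ltac wf_solve := repeat first [ assumption
  | apply: wf_nonvanishing | apply: wf_lt
  | apply: wf_mul | apply: wf_inv | apply: wf_pow | apply: wf_one ].

Lemma gmulKg g x : wf g -> wf x -> gmul (ginv g) (gmul g x) = x.
Proof.
move=> hg hx; rewrite -gmulA; [|wf_solve|wf_solve].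
by rewrite gmulVg ?gmul1g //; wf_solve.
Qed.

Lemma ginv_unique x y : wf x -> wf y -> gmul x y = e -> y = ginv x.
Proof.
move=> hx hy xy1.
by rewrite -(gmulKg hx hy) xy1 gmulg1 //; wf_solve.
Qed.

Definition gconj g y := gmul (gmul g y) (ginv g).

Lemma wf_gconj g y : wf g -> wf y -> wf (gconj g y).
Proof. by move=> hg hy; rewrite /gconj; wf_solve. Qed.

Lemma gconjM g y z : wf g -> wf y -> wf z ->
  gconj g (gmul y z) = gmul (gconj g y) (gconj g z).
Proof.
move=> hg hy hz; rewrite /gconj.
rewrite !gmulA; try by wf_solve.
by rewrite gmulKg //; wf_solve.
Qed.

Lemma gconj1 g : wf g -> gconj g e = e.
Proof. by move=> hg; rewrite /gconj gmulg1 ?gmulV //; wf_solve. Qed.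

Lemma gconj_pow g y m : wf g -> wf y -> gconj g (gpow y m) = gpow (gconj g y) m.
Proof.
move=> hg hy; elim: m => [|m IH] /=; first exact: gconj1.
by rewrite gconjM ?IH //; wf_solve.
Qed.

Lemma gconj_inv g y : wf g -> wf y -> gconj g (ginv y) = ginv (gconj g y).
Proof.
move=> hg hy; apply: ginv_unique; try by apply: wf_gconj; wf_solve.
by rewrite -gconjM ?gmulV ?gconj1 //; wf_solve.
Qed.

Lemma gconjK g u : wf g -> wf u -> gmul (ginv g) (gmul (gconj g u) g) = u.
Proof.
move=> hg hu; rewrite /gconj gmulA; try by wf_solve.
by rewrite gmulVg ?gmulg1 ?gmulKg //; wf_solve.
Qed.

Lemma gconj_eq1 g u : wf g -> wf u -> gconj g u = e -> u = e.
Proof.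
move=> hg hu gu1.
by rewrite -(gconjK hg hu) gu1 gmul1g ?gmulVg //; wf_solve.
Qed.

Lemma conjset_cyc g x y : wf g -> wf x ->
  conjset g (cyc x) y <-> cyc (gconj g x) y.
Proof.
move=> hg hx; split.
  case=> _ [m [->|->]] ->; exists m; first by left; exact: gconj_pow.
  by right; rewrite -gconj_inv // -gconj_pow //; wf_solve.
case=> m [->|->].
  by exists (gpow x m); [exists m; left | rewrite -gconj_pow].
exists (gpow (ginv x) m); first by exists m; right.
by rewrite -gconj_inv // -gconj_pow //; wf_solve.
Qed.

Lemma inT_nth t j : all (@inT R) t -> (j < p.-1)%N -> `|t`_j| = 1.
Proof. by move=> /(all_nthP 0) ht hj; apply/eqP; apply: ht; rewrite size_tuple. Qed.

Lemma all_inTP t : (forall j, (j < p.-1)%N -> `|t`_j| = 1) -> all (@inT R) t.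
Proof. by move=> ht; apply/(all_nthP 0) => j; rewrite size_tuple => /ht; rewrite /inT => ->. Qed.

Lemma inT_nonvanishing t : all (@inT R) t -> nonvanishing t.
Proof.
move=> ht k; rewrite /coord; case: ifP => [_|/negbT hk]; first exact: oner_neq0.
by rewrite -normr_eq0 inT_nth ?coord_index ?oner_neq0.
Qed.

Lemma all_inT_tone : all (@inT R) one.
Proof. by apply: all_inTP => j hj; rewrite nth_tone // normr1. Qed.

Lemma inGamma_wf x : inGamma x -> wf x.
Proof. by case=> hk ht; split => //; apply: inT_nonvanishing. Qed.

Lemma gpow_tone j m : gpow (one, j) m = (one, (j * m) %% p)%N.
Proof.
elim: m => [|m IH] /=; first by rewrite muln0 mod0n.
by rewrite IH /gmul /= iter_tone tmult1 modnDmr mulnS.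
Qed.

Lemma ginv_tone j : ginv (one, j) = (one, (p - j) %% p)%N.
Proof.
rewrite /ginv /=; congr (_, _).
have -> : tinv one = one by apply: tuple_coord_ext => k; rewrite coord_tinv coord_tone invr1.
exact: iter_tone.
Qed.

Lemma cyc_genP y : cyc (gen_a R p) y <-> exists2 k, (k < p)%N & y = (one, k).
Proof.
split; last by case=> k hk ->; exists k; left; rewrite gpow_tone mul1n modn_small.
case=> m [->|->]; last rewrite /gen_a ginv_tone; rewrite gpow_tone.
  by exists ((1 * m) %% p)%N; first exact: ltn_pmod.
by exists (((p - 1) %% p * m) %% p)%N; first exact: ltn_pmod.
Qed.

Lemma inGamma_gen : inGamma (gen_a R p).
Proof. by split; [exact: p_gt1 | exact: all_inT_tone]. Qed.

Lemma gpow_exp x m : ((gpow x m).2 = (x.2 * m) %% p)%N.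
Proof.
elim: m => [|m IH] /=; first by rewrite muln0 mod0n.
by rewrite IH modnDmr mulnS.
Qed.

Lemma emb_mul_gen t : gmul (emb t) (gen_a R p) = (t, 1%N).
Proof. by rewrite /gmul /= tmult1 modn_small. Qed.

Definition prefix_prod t k : C := \prod_(j < k) t`_j.

Definition cobound (c : C) t : tup :=
  [tuple (c ^+ (val j).+1 * prefix_prod t (val j).+1)^-1 | j < p.-1].

Lemma rho_cobound c t : (forall j, (j < p.-1)%N -> t`_j != 0) ->
  c ^+ p * prefix_prod t p.-1 = 1 -> rho (cobound c t) = tmul (cobound c t) t.
Proof.
move=> t_nz c_prod; set s := cobound c t.
have c_nz : c != 0.
  apply/eqP => c0; move: c_prod; rewrite c0 expr0n gtn_eqF // mul0r.
  by move/eqP; rewrite eq_sym oner_eq0.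
have P_nz k : (k <= p.-1)%N -> prefix_prod t k != 0.
  by move=> hk; apply/prodf_neq0 => j _; apply/t_nz/(leq_trans (ltn_ord j)).
have nth_s j : (j < p.-1)%N -> s`_j = (c ^+ j.+1 * prefix_prod t j.+1)^-1.
  by move=> hj; rewrite /s /cobound (nth_mktuple_nat _ _ hj).
have last_s : s`_(p.-2) = c.
  rewrite nth_s; last lia.
  have -> : (p.-2).+1 = p.-1 by lia.
  have cp : c ^+ p = c * c ^+ p.-1 by rewrite -exprS; congr (_ ^+ _); lia.
  have XP_nz : c ^+ p.-1 * prefix_prod t p.-1 != 0.
    by rewrite mulf_neq0 ?expf_neq0 ?P_nz.
  by apply: (mulIf XP_nz); rewrite mulVf // mulrA -cp c_prod.
apply: (@eq_from_nth_tuple _ 0) => j hj; rewrite nth_rho // nth_tmul // last_s.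
case: j hj => [|j] hj.
  rewrite eqxx nth_s // /prefix_prod big_ord1 expr1.
  change (1 / c = (c * t`_0)^-1 * t`_0).
  by have := t_nz 0%N hj => h0; field; rewrite h0 c_nz.
rewrite (nth_s j.+1 hj) (nth_s j); last lia.
have -> : prefix_prod t j.+2 = prefix_prod t j.+1 * t`_j.+1 by rewrite /prefix_prod big_ord_recr.
have := t_nz j.+1 hj; have := P_nz j.+1 (ltnW hj) => h1 h2.
by rewrite /= [c ^+ j.+2]exprS; field; rewrite h1 h2 c_nz expf_neq0.
Qed.

(* Every t in T^{p-1} is a coboundary: rho(s) = s t for some s in T^{p-1}.
   Take c a p-th root of (t`_0 ... t`_(p-2))^{-1} in [rho_cobound]. *)
Lemma circle_coboundary t : all (@inT R) t ->
  exists2 s : tup, all (@inT R) s & rho s = tmul s t.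
Proof.
move=> ht; set M := prefix_prod t p.-1.
have norm_t j : (j < p.-1)%N -> `|t`_j| = 1 := inT_nth ht.
have t_nz j : (j < p.-1)%N -> t`_j != 0.
  by move=> hj; rewrite -normr_eq0 norm_t ?oner_neq0.
have norm_P k : (k <= p.-1)%N -> `|prefix_prod t k| = 1.
  by move=> hk; rewrite normr_prod big1 // => j _; apply/norm_t/(leq_trans (ltn_ord j)).
have M_nz : M != 0 by rewrite -normr_eq0 norm_P ?oner_neq0.
pose c := p.-root M^-1.
have cp : c ^+ p = M^-1 by rewrite rootCK.
have norm_c : `|c| = 1.
  by apply/eqP; rewrite -(pexpr_eq1 p_gt0) ?normr_ge0 // -normrX cp normfV norm_P ?invr1.
exists (cobound c t); last by apply: rho_cobound => //; rewrite cp mulVf.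
apply: all_inTP => j hj; rewrite /cobound (nth_mktuple_nat _ _ hj) /=.
by rewrite normfV normrM normrX norm_c expr1n mul1r norm_P ?invr1.
Qed.

Lemma gconj_coboundary t s : nonvanishing t -> nonvanishing s ->
  rho s = tmul s t -> gconj (emb s) (t, 1%N) = gen_a R p.
Proof.
move=> ht hs rho_s; have hsi := nonvanishing_tinv hs; have hst := nonvanishing_tmul hs ht.
rewrite /gconj /gmul /ginv /emb /gen_a /= subn0 iter_rho_p //; congr (_, _).
  by rewrite add0n modn_small //= rho_tinv // rho_s tmulV.
by rewrite add0n modnn addn0 !modn_small.
Qed.

Lemma ta_order_conjugate t : all (@inT R) t ->
  has_order (gmul (emb t) (gen_a R p)) p /\
  exists2 g, inGamma g &
    forall y, conjset g (cyc (gmul (emb t) (gen_a R p))) y <-> cyc (gen_a R p) y.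
Proof.
move=> ht; rewrite emb_mul_gen.
have [s hs rho_s] := circle_coboundary ht.
have wf_ta : wf (t, 1%N) by split => //; exact: inT_nonvanishing.
have wf_s : wf (emb s) by split => //; exact: inT_nonvanishing.
have s_ta := gconj_coboundary (inT_nonvanishing ht) (inT_nonvanishing hs) rho_s.
split; last by exists (emb s) => // y; rewrite conjset_cyc // s_ta.
split; first exact: p_gt0.
split.
  apply: (gconj_eq1 wf_s (wf_pow _ wf_ta)).
  by rewrite gconj_pow // s_ta /gen_a gpow_tone mul1n modnn.
move=> m /andP[m_gt0 m_lt] tam1.
by have := gpow_exp (t, 1%N) m; rewrite tam1 /= mul1n modn_small // => m0; rewrite -m0 in m_gt0.
Qed.

Definition geom (w : C) : tup := [tuple w ^+ (val j).+1 | j < p.-1].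

Lemma nth_geom w j : (j < p.-1)%N -> (geom w)`_j = w ^+ j.+1.
Proof. by move=> hj; rewrite /geom (nth_mktuple_nat _ _ hj). Qed.

Lemma coord_geom w k : w ^+ p = 1 -> coord (geom w) k = w ^+ k.
Proof.
move=> wp1; rewrite -(expr_mod k wp1) /coord.
case: ifP => [/eqP -> //|/negbT hk]; rewrite nth_geom ?coord_index //.
by congr (_ ^+ _); lia.
Qed.

Lemma all_inT_geom w : w ^+ p = 1 -> all (@inT R) (geom w).
Proof.
move=> wp1; have norm_w : `|w| = 1.
  by apply/eqP; rewrite -(pexpr_eq1 p_gt0) ?normr_ge0 // -normrX wp1 normr1.
by apply: all_inTP => j hj; rewrite nth_geom // normrX norm_w expr1n.
Qed.

Lemma rho_geom w : w ^+ p = 1 -> rho (geom w) = geom w.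
Proof.
move=> wp1; have w_nz : w != 0 by have := oner_neq0 C; rewrite -wp1 expf_eq0 p_gt0.
have gw_nz := inT_nonvanishing (all_inT_geom wp1).
apply: tuple_coord_ext => k; rewrite coord_rho // !coord_geom // exprD.
by rewrite mulfK // expf_neq0.
Qed.

Lemma geomM w v : tmul (geom w) (geom v) = geom (w * v).
Proof. by apply: (@eq_from_nth_tuple _ 0) => j hj; rewrite nth_tmul // !nth_geom // exprMn. Qed.

Lemma geom1 : geom 1 = one.
Proof. by apply: (@eq_from_nth_tuple _ 0) => j hj; rewrite nth_geom // nth_tone // expr1n. Qed.

Lemma tinv_geom w : tinv (geom w) = geom w^-1.
Proof. by apply: (@eq_from_nth_tuple _ 0) => j hj; rewrite nth_tinv // !nth_geom // exprVn. Qed.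

Lemma gpow_geom w m : gpow (geom w, 0%N) m = (geom (w ^+ m), 0%N).
Proof.
elim: m => [|m IH] /=; first by rewrite expr0 geom1.
by rewrite IH /gmul /= geomM exprS mod0n.
Qed.

Lemma ginv_geom w : w ^+ p = 1 -> ginv (geom w, 0%N) = (geom w^-1, 0%N).
Proof.
move=> wp1; rewrite /ginv /= subn0 modnn tinv_geom iter_rho_p //.
by apply/inT_nonvanishing/all_inT_geom; rewrite exprVn wp1 invr1.
Qed.

(* The rho-fixed nonvanishing tuples are exactly the geometric tuples of
   p-th roots of unity: rho(t) = t forces coord t (k+1) = coord t k / coord t (p-1). *)
Lemma rho_fixed_geom t : nonvanishing t -> rho t = t ->
  exists2 w, w ^+ p = 1 & t = geom w.
Proof.
move=> t_nz fix_t; set d := (coord t p.-1)^-1.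
have step k : coord t k.+1 = coord t k * d.
  rewrite -{1}fix_t coord_rho //; congr (_ * _).
  by apply: coord_congr; rewrite addSnnS prednK // modnDr.
have coord_pow k : coord t k = d ^+ k.
  by elim: k => [|k IH]; rewrite ?coord0 ?expr0 // step IH exprSr.
have dp1 : d ^+ p = 1 by rewrite -coord_pow -coord_mod modnn coord0.
exists d => //; apply: tuple_coord_ext => k.
by rewrite coord_pow coord_geom.
Qed.

Lemma centre_fixed t : all (@inT R) t -> rho t = t -> centre (t, 0%N).
Proof.
move=> ht fix_t; split; first by split.
by case=> s m [hm _]; rewrite /gmul /= iter_fixed // tmulC add0n addn0.
Qed.

Lemma centre_geom w : w ^+ p = 1 -> centre (geom w, 0%N).
Proof. by move=> wp1; apply: centre_fixed; [exact: all_inT_geom | exact: rho_geom]. Qed.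

Lemma commute_gen_fixed t k : gmul (t, k) (gen_a R p) = gmul (gen_a R p) (t, k) -> rho t = t.
Proof. by move=> /(congr1 fst); rewrite /gmul /= iter_tone tmult1 tmul1t. Qed.

Lemma gconj_gen t k : nonvanishing t -> (k < p)%N ->
  gconj (t, k) (gen_a R p) = (tmul t (tinv (rho t)), 1%N).
Proof.
move=> t_nz hk; have ti_nz := nonvanishing_tinv t_nz.
rewrite /gconj /gmul /ginv /=; congr (_, _).
  rewrite iter_tone tmult1 iter_rho_mod; last exact: nonvanishing_iter.
  rewrite -iterD (_ : (k + 1 + (p - k))%N = 1 + p); last lia.
  by rewrite iterD iter_rho_p //= rho_tinv.
rewrite modnDm (_ : (k + 1 + (p - k))%N = 1 + p); last lia.
by rewrite modnDr modn_small.
Qed.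

Let theta : R := 2 * pi / p%:R.

Lemma xi_pow m : xi R p ^+ m = Complex (cos (m%:R * theta)) (sin (m%:R * theta)).
Proof.
elim: m => [|m IH]; first by rewrite expr0 mul0r cos0 sin0.
rewrite exprS IH /xi -/theta.
have -> : m.+1%:R * theta = theta + m%:R * theta by rewrite mulrS mulrDl mul1r.
by rewrite cosD sinD /=; congr Complex; ring.
Qed.

Lemma xi_p : xi R p ^+ p = 1.
Proof.
rewrite xi_pow (_ : p%:R * theta = pi *+ 2) ?cos2pi ?sin2pi //.
by rewrite /theta mulrC divfK ?mulr_natl // pnatr_eq0 -lt0n.
Qed.

(* xi_p <> 1: for p = 2 it is cos pi = -1, for p > 2 its sine is positive. *)
Lemma xi_neq1 : xi R p != 1.
Proof.
apply/eqP; rewrite /xi -/theta; case=> cos_th sin_th.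
have p_pos : (0 < p%:R :> R) by rewrite ltr0n.
have := pi_gt0 R; case: (ltngtP p 2) => [|p_gt2|p2] pi_pos; first lia.
  have : 0 < sin theta.
    apply: sin_gt0_pi; apply/andP; split; first by rewrite divr_gt0 ?mulr_gt0.
    have : (2 < p%:R :> R) by rewrite ltr_nat.
    by rewrite ltr_pdivrMr // => ?; nra.
  by rewrite sin_th ltxx.
move: cos_th; rewrite /theta p2 (_ : 2 * pi / 2%:R = pi) ?cospi; first lra.
by rewrite mulrAC divff ?mul1r // pnatr_eq0.
Qed.

Section PrimeOrder.
Hypothesis p_prime : prime p.

Lemma xi_primitive : p.-primitive_root (xi R p).
Proof.
have [m xi_m m_dvd] := prim_order_exists p_gt0 xi_p.
have /primeP [_ dvd_p] := p_prime.
case/orP: (dvd_p m m_dvd) => /eqP m_eq; move: xi_m; rewrite m_eq // => xi_1.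
by move: xi_neq1; rewrite -[xi R p]expr1 (prim_expr_order xi_1) eqxx.
Qed.

Definition itest : tup := [tuple if val j == 0%N then 'i%C else 1 | j < p.-1].

Lemma coord_itest k : coord itest k = if (k %% p == 1)%N then 'i%C else 1.
Proof.
rewrite /coord; case: ifP => [/eqP -> //|/negbT hk].
rewrite /itest (nth_mktuple_nat _ _ (coord_index hk)) /=.
by move: hk; case: (k %% p)%N => [|[]].
Qed.

Lemma all_inT_itest : all (@inT R) itest.
Proof.
apply: all_inTP => j hj; rewrite /itest (nth_mktuple_nat _ _ hj) /=.
case: (j == 0)%N; last exact: normr1.
by rewrite normc_def /= expr0n /= add0r expr1n sqrtr1.
Qed.

(* No power rho^k with p not dividing k fixes the test tuple: its coordinate
   at 1 becomes 1 / coord itest ((p-1) k), which is 1 or 1 / 'i, never 'i. *)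
Lemma iter_rho_itest k : (k %% p != 0)%N -> iter k rho itest != itest.
Proof.
move=> hk; have it_nz := inT_nonvanishing all_inT_itest.
apply/eqP => /(congr1 (coord^~ 1%N)); rewrite coord_iter //.
set X := (p.-1 * k)%N.
have X_nz : (X %% p != 0)%N.
  rewrite -/(dvdn p X) Euclid_dvdM // negb_or hk andbT.
  by apply/negP => /dvdn_leq; lia.
have X1 : ((1 + X) %% p != 1)%N.
  apply: contra X_nz => /eqP X1.
  have : (1 + X == 1 + 0 %[mod p])%N by rewrite X1 addn0 modn_small.
  by rewrite eqn_modDl mod0n.
rewrite !coord_itest (negbTE X1) (modn_small p_gt1) eqxx.
have i_nz : 'i%C != 0 :> C by apply/eqP; case=> /eqP; rewrite oner_eq0.
case: ifP => _ h.
  have : 'i%C ^+ 2 = 1 :> C by rewrite expr2 -{1}h mul1r mulVf.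
  by rewrite sqr_i => /eqP; rewrite eqNr oner_eq0.
have : 'i%C = 1 :> C by rewrite -h divr1.
by case=> /eqP; rewrite eq_sym oner_eq0.
Qed.

(* Central elements lie in T^{p-1}: they must commute with the test tuple. *)
Lemma centre_exp0 x : centre x -> x.2 = 0%N.
Proof.
case: x => t k [[/= hk ht] central] /=.
have t_nz := inT_nonvanishing ht.
have /(congr1 fst) := central _ (conj p_gt0 all_inT_itest : inGamma (itest, 0%N)).
rewrite /gmul /= tmulC => /(tmulIr t_nz) fix_itest.
apply/eqP; apply: contraT => k_nz; have := @iter_rho_itest k.
by rewrite modn_small // fix_itest eqxx => /(_ k_nz).
Qed.

Lemma centreP x : centre x <-> [/\ x.2 = 0%N, all (@inT R) x.1 & rho x.1 = x.1].
Proof.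
split=> [hx | ]; last by case: x => t k [/= -> ht fix_t]; exact: centre_fixed.
have k0 := centre_exp0 hx; case: x hx k0 => t k [[_ ht] central] /= k0.
by split=> //; apply: (@commute_gen_fixed _ k); apply: central inGamma_gen.
Qed.

Lemma zetaE : zeta R p = (geom (xi R p), 0%N).
Proof. by []. Qed.

(* Part (2): Z(Gamma_p) = <zeta>, since the rho-fixed tuples are the
   geometric tuples of p-th roots of unity, i.e. of powers of xi_p. *)
Lemma centre_cyc_zeta x : centre x <-> cyc (zeta R p) x.
Proof.
rewrite zetaE; split=> [/centreP [] | [m [->|->]]].
- case: x => t k /= -> ht fix_t.
  have [w wp1 ->] := rho_fixed_geom (inT_nonvanishing ht) fix_t.
  by have [i ->] := prim_rootP xi_primitive wp1; exists i; left; rewrite gpow_geom.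
- by rewrite gpow_geom; apply: centre_geom; rewrite exprAC xi_p expr1n.
- rewrite ginv_geom ?xi_p // gpow_geom; apply: centre_geom.
  by rewrite exprAC exprVn xi_p invr1 expr1n.
Qed.

(* Part (3): t a^k normalises <a> iff t is rho-fixed, i.e. iff it lies in
   Z(Gamma_p) C_p; indeed t a^k conjugates a to (t rho(t)^{-1}) a. *)
Lemma normaliser_gen g : normaliser (cyc (gen_a R p)) g <->
  exists z c, centre z /\ cyc (gen_a R p) c /\ g = gmul z c.
Proof.
have wf_a := inGamma_wf inGamma_gen.
split.
  case: g => t k [[/= hk ht] normal]; have t_nz := inT_nonvanishing ht.
  have : cyc (gen_a R p) (gconj (t, k) (gen_a R p)).
    by apply/normal; exists (gen_a R p) => //; apply/cyc_genP; exists 1%N.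
  rewrite gconj_gen // => /cyc_genP [j _ conj_a].
  have ratio : tmul t (tinv (rho t)) = one := congr1 fst conj_a.
  have rt_nz := nonvanishing_rho t_nz.
  have fix_t : rho t = t.
    by apply/esym/(tmulIr (nonvanishing_tinv rt_nz)); rewrite ratio tmulV.
  exists (t, 0%N), (one, k); split; first exact: centre_fixed.
  by split; [apply/cyc_genP; exists k | rewrite /gmul /= tmult1 modn_small].
case=> z [c [/centreP [z0 hz fix_z] [/cyc_genP [k hk ->] ->]]].
case: z z0 hz fix_z => w m /= -> hw fix_w; have w_nz := inT_nonvanishing hw.
have -> : gmul (w, 0%N) (one, k) = (w, k) by rewrite /gmul /= tmult1 modn_small.
split; first by split.
by move=> y; rewrite conjset_cyc // gconj_gen // fix_w tmulV.
Qed.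

Lemma centre_cyc_gen x : centre x -> cyc (gen_a R p) x -> x = e.
Proof. by move=> /centre_exp0 x0 /cyc_genP [k _ xk]; move: x0; rewrite xk /= => ->. Qed.

End PrimeOrder.
End TwistedShift.

Theorem lemma3p4 (R : realType) (p : nat) (hp : prime p) :
  (* (1) *)
  (forall t : (p.-1).-tuple R[i], all (@inT R) t ->
     has_order (gmul (emb t) (gen_a R p)) p /\
     exists2 g, inGamma g &
       forall y, conjset g (cyc (gmul (emb t) (gen_a R p))) y <-> cyc (gen_a R p) y)
  (* (2) *)
  /\ (forall x, @centre R p x <-> cyc (zeta R p) x)
  (* (3) : N(C_p) = Z(Gamma_p) x C_p, an internal direct product *)
  /\ (forall g, normaliser (cyc (gen_a R p)) g <->
        exists z c, @centre R p z /\ cyc (gen_a R p) c /\ g = gmul z c)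
  /\ (forall x, @centre R p x -> cyc (gen_a R p) x -> x = @gone R p).
Proof.
have p_gt1 := prime_gt1 hp.
split; first exact: ta_order_conjugate.
split; first exact: centre_cyc_zeta.
split; first exact: normaliser_gen.
exact: centre_cyc_gen.
Qed.
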